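(* Consider a Markov decision process with continuous state space $\mathcal{S}$, continuous action space $\mathcal{A}$, transition density $p(\mathbf{s}'|\mathbf{s},\mathbf{a})$ and discount factor $\gamma\in(0,1)$, and let $r_1,r_2$ be bounded reward functions with optimal soft Q-functions (temperature $1$) $Q_1^*, Q_2^*$ and optimal soft policies $\pi_i^*(\mathbf{a}|\mathbf{s})\propto\exp(Q_i^*(\mathbf{s},\mathbf{a}))$. Let $Q_\Sigma=\frac12(Q_1^*+Q_2^* )$, $r_\mathcal{C}=\frac12(r_1+r_2)$, let $Q_\mathcal{C}^*$ be the optimal soft Q-function for $r_\mathcal{C}$, and let $C^*$ be the fixed point of $$C(\mathbf{s},\mathbf{a}) \leftarrow \gamma\, \mathbb{E}_{\mathbf{s}'\sim p(\mathbf{s}'|\mathbf{s},\mathbf{a})}\Big[ D_{1/2}\big(\pi_1^*(\cdot|\mathbf{s}')\,\|\,\pi_2^*(\cdot|\mathbf{s}')\big) + \max_{\mathbf{a}'\in\mathcal{A}} C(\mathbf{s}',\mathbf{a}')\Big].$$ Define $V_\Sigma(\mathbf{s}) = \log\int_{\mathcal{A}}\exp(Q_\Sigma(\mathbf{s},\mathbf{a}))\,d\mathbf{a}$ and $V_\mathcal{C}^*(\mathbf{s}) = \log\int_{\mathcal{A}}\exp(Q_\mathcal{C}^*(\mathbf{s},\mathbf{a}))\,d\mathbf{a}$. Then for all $\mathbf{s}\in\mathcal{S}$, $$V_\Sigma(\mathbf{s}) \ge V_\mathcal{C}^*(\mathbf{s}) \ge V_\Sigma(\mathbf{s}) - \max_{\mathbf{a}}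 C^*(\mathbf{s},\mathbf{a}).$$
   Context: Soft (maximum-entropy) reinforcement learning with temperature $1$: for a bounded reward $r$, the soft Bellman backup maps a bounded $Q$ to $r(\mathbf{s},\mathbf{a}) + \gamma\,\mathbb{E}_{\mathbf{s}'\sim p(\cdot|\mathbf{s},\mathbf{a})}[\log\int_{\mathcal{A}}\exp(Q(\mathbf{s}',\mathbf{a}'))\,d\mathbf{a}']$; the optimal soft Q-function for $r$ is its unique fixed point, and the optimal soft policy is proportional to $\exp$ of it. $D_{1/2}(p\|q) = -2\log\int\sqrt{p q}$ is the Rényi divergence of order $1/2$. *)

From HB Require Import structures.
From mathcomp Require Import all_boot all_order all_algebra.
From mathcomp Require Import all_classical all_reals all_analysis.
Set Implicit Arguments. Unset Strict Implicit. Unset Printing Implicit Defensive.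
Import Order.TTheory GRing.Theory Num.Theory.
Local Open Scope classical_set_scope.
Local Open Scope ring_scope.

Section SoftRL.
Context {d1 d2 : measure_display} {S : measurableType d1} {A : measurableType d2}
  {R : realType}.

(* reference measure on actions (the "da" of the paper) *)
Variable mu : {measure set A -> \bar R}.
(* reference measure on states, w.r.t. which p(s'|s,a) is a density *)
Variable nu : {measure set S -> \bar R}.

Definition partZ (Q : S -> A -> R) (s : S) : R :=
  Rintegral mu setT (fun a => expR (Q s a)).

Definition softV (Q : S -> A -> R) (s : S) : R := ln (partZ Q s).

Definition softpol (Q : S -> A -> R) (s : S) (a : A) : R :=
  expR (Q s a) / partZ Q s.

Definition expect (p : S -> A -> S -> R) (s : S) (a : A) (f : S -> R) : R :=
  Rintegral nu setT (fun s' => p s a s' * f s').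

Definition soft_backup (p : S -> A -> S -> R) (gamma : R) (r : S -> A -> R)
    (Q : S -> A -> R) (s : S) (a : A) : R :=
  r s a + gamma * expect p s a (softV Q).

Definition renyi_half (P1 P2 : A -> R) : R :=
  - 2 * ln (Rintegral mu setT (fun a => Num.sqrt (P1 a * P2 a))).

(* the backup defining C^* ; max over actions is taken as supremum *)
Definition C_backup (p : S -> A -> S -> R) (gamma : R) (Q1 Q2 : S -> A -> R)
    (C : S -> A -> R) (s : S) (a : A) : R :=
  gamma * expect p s a
    (fun s' => renyi_half (softpol Q1 s') (softpol Q2 s') + sup (range (C s'))).

Definition boundedSA (f : S -> A -> R) : Prop :=
  exists M : R, forall s a, `|f s a| <= M.

Definition measurableSA (f : S -> A -> R) : Prop :=
  measurable_fun setT (fun x : S * A => f x.1 x.2).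

(* Q is the optimal soft Q-function for r: a bounded measurable fixed point of
   the soft Bellman backup (such a fixed point is unique). *)
Definition is_opt_softQ (p : S -> A -> S -> R) (gamma : R) (r Q : S -> A -> R) : Prop :=
  boundedSA Q /\ measurableSA Q /\ (forall s a, Q s a = soft_backup p gamma r Q s a).

Definition transition_density (p : S -> A -> S -> R) : Prop :=
  (forall s a s', 0 <= p s a s') /\
  measurable_fun setT (fun x : (S * A) * S => p x.1.1 x.1.2 x.2) /\
  (forall s a, (\int[nu]_s' (p s a s')%:E = 1)%E).

End SoftRL.

(* Both inequalities are comparison principles for gamma-contractions. The soft
   value V_Q(s) = log \int exp Q(s,.) dmu is monotone (Q <= Q' + c gives
   V_Q <= V_Q' + c) and midpoint convex (V_{(Q1+Q2)/2} <= (V_1 + V_2)/2), and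
   D_{1/2}(pi_1 || pi_2) = V_1 + V_2 - 2 V_{(Q1+Q2)/2}. Subtracting the Bellman
   equations, D := Q_C - Q_Sigma satisfies D <= gamma sup D, and
   E := Q_Sigma - Q_C - C satisfies E <= gamma sup E, so both are nonpositive.
   Applying V to Q_C <= Q_Sigma <= Q_C + max_a C(s, a) gives the two bounds. *)

From HB Require Import structures.
From mathcomp Require Import all_boot all_order all_algebra.
From mathcomp Require Import all_classical all_reals all_analysis.
From mathcomp Require Import measurable_realfun ring lra.
Set Implicit Arguments. Unset Strict Implicit. Unset Printing Implicit Defensive.
Import Order.TTheory GRing.Theory Num.Theory.
Local Open Scope classical_set_scope.
Local Open Scope ring_scope.

Section normr_bounded.
Context {T : Type} {R : realDomainType}.
Implicit Types f g : T -> R.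

Definition normr_bounded f : Prop := exists M, forall x, `|f x| <= M.

Lemma normr_bounded_cst (c : R) : normr_bounded (fun=> c).
Proof. by exists `|c|. Qed.

Lemma normr_boundedD f g : normr_bounded f -> normr_bounded g ->
  normr_bounded (fun x => f x + g x).
Proof.
move=> [M fM] [N gN]; exists (M + N) => x.
by rewrite (le_trans (ler_normD _ _)) ?lerD.
Qed.

Lemma normr_boundedB f g : normr_bounded f -> normr_bounded g ->
  normr_bounded (fun x => f x - g x).
Proof.
move=> [M fM] [N gN]; exists (M + N) => x.
by rewrite (le_trans (ler_normB _ _)) ?lerD.
Qed.

Lemma normr_boundedMl (c : R) f : normr_bounded f -> normr_bounded (fun x => c * f x).
Proof. by move=> [M fM]; exists (`|c| * M) => x; rewrite normrM ler_wpM2l. Qed.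

Lemma normr_boundedMr f (c : R) : normr_bounded f -> normr_bounded (fun x => f x * c).
Proof. by move=> [M fM]; exists (M * `|c|) => x; rewrite normrM ler_wpM2r. Qed.

Lemma normr_bounded_has_ubound f : normr_bounded f -> has_ubound (range f).
Proof. by move=> [M fM]; exists M => _ [x _ <-]; rewrite (le_trans (ler_norm _)). Qed.

End normr_bounded.

Lemma normr_bounded_near {T : Type} {R : realType} (f : T -> R) :
  normr_bounded f -> [bounded f x | x in setT].
Proof.
move=> [M fM]; exists M; split; first by rewrite num_real.
by move=> N MN x _ /=; rewrite (le_trans (fM x)) ?ltW.
Qed.

Lemma le0_contraction_sup {T : Type} {R : realType} (D : T -> R) (gamma : R) :
  gamma < 1 -> has_ubound (range D) ->
  (forall x, D x <= gamma * sup (range D)) -> forall x, D x <= 0.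
Proof.
move=> gamma1 ubD Dgamma x.
have supD : sup (range D) <= gamma * sup (range D).
  by apply: ge_sup; [exists (D x), x | move=> _ [y _ <-]; exact: Dgamma].
have Dsup : D x <= sup (range D) by apply: ub_le_sup => //; exists x.
nra.
Qed.

Section bounded_measurable.
Context {d : measure_display} {T : measurableType d} {R : realType}.
Implicit Types f g : T -> R.

Definition bounded_measurable f : Prop := measurable_fun setT f /\ normr_bounded f.

Lemma bounded_measurable_cst (c : R) : bounded_measurable (fun=> c).
Proof. by split; [exact: measurable_cst | exact: normr_bounded_cst]. Qed.

Lemma bounded_measurableD f g : bounded_measurable f -> bounded_measurable g ->
  bounded_measurable (fun x => f x + g x).
Proof. by move=> [mf bf] [mg bg]; split; [exact: measurable_funD | exact: normr_boundedD]. Qed.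

Lemma bounded_measurableB f g : bounded_measurable f -> bounded_measurable g ->
  bounded_measurable (fun x => f x - g x).
Proof. by move=> [mf bf] [mg bg]; split; [exact: measurable_funB | exact: normr_boundedB]. Qed.

Lemma bounded_measurableMr f (c : R) : bounded_measurable f ->
  bounded_measurable (fun x => f x * c).
Proof. by move=> [mf bf]; split; [exact: measurable_funM | exact: normr_boundedMr]. Qed.

Lemma bounded_measurable_expR f : bounded_measurable f ->
  bounded_measurable (fun x => expR (f x)).
Proof.
move=> [mf [M fM]]; split; first exact: measurableT_comp mf.
exists (expR M) => x; rewrite gtr0_norm ?expR_gt0// ler_expR.
exact: le_trans (ler_norm _) (fM x).
Qed.

Lemma integrable_bounded_measurable (mu : {measure set T -> \bar R}) f :
  (mu setT < +oo)%E -> bounded_measurable f -> mu.-integrable setT (EFin \o f).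
Proof.
by move=> muoo [mf bf]; apply: measurable_bounded_integrable => //; exact: normr_bounded_near.
Qed.

End bounded_measurable.

Section integral_monotone.
Context {d : measure_display} {T : measurableType d} {R : realType}.
Variable mu : {measure set T -> \bar R}.

(* The integral of a nonnegative function is a supremum over the simple
   functions below it, hence monotone without any measurability. *)
Lemma ge0_le_integralT (f g : T -> \bar R) : (forall x, 0 <= f x)%E ->
  (forall x, f x <= g x)%E -> (\int[mu]_x f x <= \int[mu]_x g x)%E.
Proof.
move=> f0 fg; have g0 x : (0 <= g x)%E := le_trans (f0 x) (fg x).
rewrite !ge0_integralTE //; apply: ereal_sup_le => _ [h hf <-].
by exists h => //= x; exact: le_trans (hf x) (fg x).
Qed.

Lemma le_Rintegral_sandwich (g f h : T -> R) :
  mu.-integrable setT (EFin \o g) -> mu.-integrable setT (EFin \o h) ->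
  (forall x, g x <= f x) -> (forall x, f x <= h x) ->
  Rintegral mu setT g <= Rintegral mu setT f.
Proof.
move=> ig ih gf fh.
have fin_pos (u : T -> R) : (0 <= \int[mu]_x (EFin \o u)^\+ x)%E.
  by apply: integral_ge0 => x _; exact: funepos_ge0.
have fin_neg (u : T -> R) : (0 <= \int[mu]_x (EFin \o u)^\- x)%E.
  by apply: integral_ge0 => x _; exact: funeneg_ge0.
have le_pos (u v : T -> R) : (forall x, u x <= v x) ->
    (\int[mu]_x (EFin \o u)^\+ x <= \int[mu]_x (EFin \o v)^\+ x)%E.
  move=> uv; apply: ge0_le_integralT => x; first exact: funepos_ge0.
  by apply: (@funepos_le _ _ setT); rewrite ?inE// => y _; rewrite lee_fin.
have le_neg (u v : T -> R) : (forall x, u x <= v x) ->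
    (\int[mu]_x (EFin \o v)^\- x <= \int[mu]_x (EFin \o u)^\- x)%E.
  move=> uv; apply: ge0_le_integralT => x; first exact: funeneg_ge0.
  by apply: (@funeneg_le _ _ setT); rewrite ?inE// => y _; rewrite lee_fin.
have fpos : (\int[mu]_x (EFin \o f)^\+ x)%E \is a fin_num.
  rewrite ge0_fin_numE ?fin_pos//; apply: le_lt_trans (le_pos _ _ fh) _.
  by rewrite -ge0_fin_numE ?fin_pos// integrable_pos_fin_num.
have fneg : (\int[mu]_x (EFin \o f)^\- x)%E \is a fin_num.
  rewrite ge0_fin_numE ?fin_neg//; apply: le_lt_trans (le_neg _ _ gf) _.
  by rewrite -ge0_fin_numE ?fin_neg// integrable_neg_fin_num.
rewrite /Rintegral (integralE _ _ (EFin \o f)) (integralE _ _ (EFin \o g)).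
apply: fine_le (leeB (le_pos _ _ gf) (le_neg _ _ gf)).
  by rewrite fin_numB integrable_pos_fin_num ?integrable_neg_fin_num.
by rewrite fin_numB fpos fneg.
Qed.

End integral_monotone.

Section expectation.
Context {d1 d2 : measure_display} {S : measurableType d1} {A : measurableType d2}
  {R : realType}.
Variables (nu : {measure set S -> \bar R}) (p : S -> A -> S -> R).
Hypothesis hp : transition_density nu p.
Implicit Types f g : S -> R.

Lemma integrable_density s a : nu.-integrable setT (EFin \o p s a).
Proof.
have [p0 [mp p1]] := hp; apply/integrableP; split.
  exact/measurable_EFinP/(measurable_fun_pair2 (s, a) mp).
under eq_integral do rewrite /= ger0_norm//.
by rewrite p1 ltry.
Qed.

Lemma integrable_expect s a f : bounded_measurable f ->
  nu.-integrable setT (EFin \o (fun s' => p s a s' * f s')).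
Proof.
move=> [mf bf].
have := integrableMl measurableT (integrable_density s a) mf (normr_bounded_near bf).
by apply: eq_integrable => // x _; rewrite /= EFinM.
Qed.

Lemma expect_cst s a c : expect nu p s a (fun=> c) = c.
Proof.
have [_ [_ p1]] := hp.
by rewrite /expect RintegralZr ?integrable_density// /Rintegral p1 mul1r.
Qed.

Lemma expectD s a f g : bounded_measurable f -> bounded_measurable g ->
  expect nu p s a (fun x => f x + g x) = expect nu p s a f + expect nu p s a g.
Proof.
move=> bf bg; rewrite /expect -RintegralD ?integrable_expect//.
by apply: eq_Rintegral => x _; rewrite mulrDr.
Qed.

Lemma expectB s a f g : bounded_measurable f -> bounded_measurable g ->
  expect nu p s a (fun x => f x - g x) = expect nu p s a f - expect nu p s a g.
Proof.
move=> bf bg; rewrite /expect -RintegralB ?integrable_expect//.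
by apply: eq_Rintegral => x _; rewrite mulrBr.
Qed.

Lemma expectMr s a f c : bounded_measurable f ->
  expect nu p s a (fun x => f x * c) = expect nu p s a f * c.
Proof.
move=> bf; rewrite /expect -RintegralZr ?integrable_expect//.
by apply: eq_Rintegral => x _; rewrite mulrA.
Qed.

Lemma le_expect s a g f : bounded_measurable g -> normr_bounded f ->
  (forall x, g x <= f x) -> expect nu p s a g <= expect nu p s a f.
Proof.
have [p0 _] := hp; move=> bg [M fM] gf.
apply: (le_Rintegral_sandwich (h := fun x => p s a x * M)).
- exact: integrable_expect.
- exact: integrable_expect (bounded_measurable_cst M).
- by move=> x; rewrite ler_wpM2l.
- by move=> x; rewrite ler_wpM2l// (le_trans (ler_norm _)).
Qed.

End expectation.

Lemma expR_mid_le {R : realType} (x y : R) : expR ((x + y) / 2) <= (expR x + expR y) / 2.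
Proof.
have halfE (z : R) : expR z = expR (z / 2) ^+ 2 by rewrite expr2 -expRD -splitr.
rewrite mulrDl expRD (halfE x) (halfE y) ler_pdivlMr//.
have := sqr_ge0 (expR (x / 2) - expR (y / 2)); nra.
Qed.

Section state_action.
Context {d1 d2 : measure_display} {S : measurableType d1} {A : measurableType d2}
  {R : realType}.
Implicit Types Q : S -> A -> R.

Definition meanSA Q1 Q2 : S -> A -> R := fun s a => (Q1 s a + Q2 s a) / 2.

Lemma normr_bounded_section Q s : boundedSA Q -> normr_bounded (Q s).
Proof. by move=> [M QM]; exists M. Qed.

Lemma normr_bounded_uncurry Q : boundedSA Q -> normr_bounded (fun x : S * A => Q x.1 x.2).
Proof. by move=> [M QM]; exists M. Qed.

Lemma bounded_measurable_section Q s : boundedSA Q -> measurableSA Q ->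
  bounded_measurable (Q s).
Proof.
by move=> bQ mQ; split; [exact: (measurable_fun_pair2 s mQ) | exact: normr_bounded_section].
Qed.

Lemma normr_bounded_sup_range Q (a0 : A) : boundedSA Q ->
  normr_bounded (fun s => sup (range (Q s))).
Proof.
move=> bQ; have [M QM] := bQ; exists M => s; rewrite ler_norml; apply/andP; split.
  apply: le_trans (_ : Q s a0 <= _).
    by rewrite lerNl (le_trans _ (QM s a0))// -normrN ler_norm.
  apply: ub_le_sup; last by exists a0.
  exact/normr_bounded_has_ubound/normr_bounded_section.
apply: ge_sup; first by exists (Q s a0), a0.
by move=> _ [a _ <-]; rewrite (le_trans (ler_norm _)).
Qed.

Lemma boundedSA_mean Q1 Q2 : boundedSA Q1 -> boundedSA Q2 -> boundedSA (meanSA Q1 Q2).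
Proof.
move=> [M1 QM1] [M2 QM2]; exists ((M1 + M2) / 2) => s a.
rewrite normrM [`|2^-1|]ger0_norm// ler_pM2r// (le_trans (ler_normD _ _))//.
exact: lerD.
Qed.

Lemma bounded_measurable_mean Q1 Q2 s :
  bounded_measurable (Q1 s) -> bounded_measurable (Q2 s) ->
  bounded_measurable (meanSA Q1 Q2 s).
Proof. by move=> b1 b2; exact: bounded_measurableMr (bounded_measurableD b1 b2). Qed.

Lemma measurableSA_mean Q1 Q2 : measurableSA Q1 -> measurableSA Q2 ->
  measurableSA (meanSA Q1 Q2).
Proof. by move=> m1 m2; apply: measurable_funM => //; exact: measurable_funD. Qed.

End state_action.

Section soft_value.
Context {d1 d2 : measure_display} {S : measurableType d1} {A : measurableType d2}
  {R : realType}.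
Variable mu : {measure set A -> \bar R}.
Hypotheses (mu0 : (0 < mu setT)%E) (muoo : (mu setT < +oo)%E).
Implicit Types Q : S -> A -> R.

Let mT_gt0 : 0 < fine (mu setT).
Proof. by rewrite fine_gt0// mu0 muoo. Qed.

Let integrable_expR Q s : bounded_measurable (Q s) ->
  mu.-integrable setT (EFin \o (fun a => expR (Q s a))).
Proof. by move=> bQ; exact/integrable_bounded_measurable/bounded_measurable_expR. Qed.

Lemma partZ_gt0 Q s : bounded_measurable (Q s) -> 0 < partZ mu Q s.
Proof.
move=> bQ; have [_ [M QM]] := bQ.
apply: (@lt_le_trans _ _ (Rintegral mu setT (fun=> expR (- M)))).
  by rewrite Rintegral_cst// mulr_gt0 ?expR_gt0.
apply: le_Rintegral => //; last first.
- by move=> a _; rewrite ler_expR lerNl (le_trans _ (QM a))// -normrN ler_norm.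
- exact: integrable_expR.
- exact: integrable_bounded_measurable muoo (bounded_measurable_cst _).
Qed.

Lemma partZE Q s : bounded_measurable (Q s) -> partZ mu Q s = expR (softV mu Q s).
Proof. by move=> bQ; rewrite lnK ?posrE ?partZ_gt0. Qed.

Lemma softV_cst (s : S) c : softV mu (fun _ _ => c) s = c + ln (fine (mu setT)).
Proof. by rewrite /softV /partZ Rintegral_cst// lnM ?posrE ?expR_gt0// expRK. Qed.

Lemma le_softV Q Q' s c : bounded_measurable (Q s) -> bounded_measurable (Q' s) ->
  (forall a, Q s a <= Q' s a + c) -> softV mu Q s <= softV mu Q' s + c.
Proof.
move=> bQ bQ' QQ'.
have Zc_gt0 : 0 < partZ mu Q' s * expR c by rewrite mulr_gt0 ?partZ_gt0 ?expR_gt0.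
rewrite -[c in X in _ <= X]expRK -lnM ?posrE ?partZ_gt0 ?expR_gt0//.
rewrite ler_ln ?posrE ?partZ_gt0// /partZ -RintegralZr ?integrable_expR//.
apply: le_Rintegral => //; first exact: integrable_expR.
  apply: integrable_bounded_measurable => //.
  exact/bounded_measurableMr/bounded_measurable_expR.
by move=> a _; rewrite -expRD ler_expR.
Qed.

Lemma normr_bounded_softV Q : boundedSA Q -> measurableSA Q ->
  normr_bounded (softV mu Q).
Proof.
move=> bQ mQ; have [M QM] := bQ; exists (M + `|ln (fine (mu setT))|) => s.
have bQs := bounded_measurable_section s bQ mQ.
have b0 : bounded_measurable (fun _ : A => 0 : R) := bounded_measurable_cst 0.
have up : softV mu Q s <= softV mu (fun _ _ => 0) s + M.
  by apply: le_softV => // a; rewrite add0r (le_trans (ler_norm _)).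
have low : softV mu (fun _ _ => 0) s <= softV mu Q s + M.
  apply: le_softV => // a; rewrite -lerBlDr sub0r lerNl.
  by rewrite (le_trans _ (QM s a))// -normrN ler_norm.
move: up low; rewrite softV_cst add0r; set L := ln _ => up low.
have := ler_norm L; have := ler_norm (- L); rewrite normrN ler_norml.
by move=> *; apply/andP; split; lra.
Qed.

Section measurable_softV.
(* A copy of [mu] carrying the finite, hence sigma-finite, measure structure
   that Fubini-Tonelli requires. *)
Let muF : set A -> \bar R := mu.
HB.instance Definition _ := Measure.copy muF mu.
Let muF_fin : fin_num_fun muF.
Proof.
move=> X mX; rewrite ge0_fin_numE ?measure_ge0//.
by apply: le_lt_trans muoo; apply: le_measure; rewrite ?inE.
Qed.
HB.instance Definition _ := Measure_isFinite.Build _ _ _ muF muF_fin.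

Lemma measurable_softV Q : measurableSA Q -> measurable_fun setT (softV mu Q).
Proof.
move=> mQ; apply: measurableT_comp; first exact: measurable_ln.
apply: measurableT_comp (fine_measurable measurableT) _.
apply: (@measurable_fun_fubini_tonelli_F _ _ _ _ _ muF (fun x => (expR (Q x.1 x.2))%:E)).
  exact/measurable_EFinP/measurableT_comp.
by move=> x; rewrite lee_fin expR_ge0.
Qed.
End measurable_softV.

Lemma bounded_measurable_softV Q : boundedSA Q -> measurableSA Q ->
  bounded_measurable (softV mu Q).
Proof. by move=> bQ mQ; split; [exact: measurable_softV | exact: normr_bounded_softV]. Qed.

(* With [w = (V2 - V1) / 2], both [Z1 e^w] and [Z2 e^-w] equal
   [exp ((V1 + V2) / 2)], so [expR_mid_le] applies under the integral. *)
Lemma softV_mean_le Q1 Q2 s : bounded_measurable (Q1 s) -> bounded_measurable (Q2 s) ->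
  softV mu (meanSA Q1 Q2) s <= (softV mu Q1 s + softV mu Q2 s) / 2.
Proof.
move=> b1 b2; have bS := bounded_measurable_mean b1 b2.
move: (partZE b1) (partZE b2).
move: (softV mu Q1 s) (softV mu Q2 s) => V1 V2 eZ1 eZ2.
have [w ew] : exists w, w = (V2 - V1) / 2 by eexists.
pose g a := (expR (Q1 s a) * expR w + expR (Q2 s a) * expR (- w)) / 2.
have bg1 := bounded_measurableMr (expR w) (bounded_measurable_expR b1).
have bg2 := bounded_measurableMr (expR (- w)) (bounded_measurable_expR b2).
have bg : bounded_measurable g := bounded_measurableMr _ (bounded_measurableD bg1 bg2).
have intg : Rintegral mu setT g = expR ((V1 + V2) / 2).
  have int1 := integrable_bounded_measurable muoo bg1.
  have int2 := integrable_bounded_measurable muoo bg2.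
  have int12 := integrable_bounded_measurable muoo (bounded_measurableD bg1 bg2).
  have -> := RintegralZr (2^-1) measurableT int12.
  have -> := RintegralD measurableT int1 int2.
  have -> := RintegralZr (expR w) measurableT (integrable_expR b1).
  have -> := RintegralZr (expR (- w)) measurableT (integrable_expR b2).
  rewrite -/(partZ mu Q1 s) -/(partZ mu Q2 s) eZ1 eZ2.
  have -> : expR V1 * expR w = expR ((V1 + V2) / 2) by rewrite -expRD ew; congr expR; lra.
  have -> : expR V2 * expR (- w) = expR ((V1 + V2) / 2) by rewrite -expRD ew; congr expR; lra.
  lra.
rewrite /softV -[X in _ <= X]expRK ler_ln ?posrE ?partZ_gt0 ?expR_gt0// -intg.
apply: le_Rintegral => //; [exact: integrable_expR | exact: integrable_bounded_measurable |].
move=> a _; rewrite /g /meanSA.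
have := expR_mid_le (Q1 s a + w) (Q2 s a + - w).
by rewrite !expRD; congr (expR _ <= _); lra.
Qed.

Lemma renyi_half_softpol Q1 Q2 s : bounded_measurable (Q1 s) -> bounded_measurable (Q2 s) ->
  renyi_half mu (softpol mu Q1 s) (softpol mu Q2 s) =
  softV mu Q1 s + softV mu Q2 s - 2 * softV mu (meanSA Q1 Q2) s.
Proof.
move=> b1 b2; have bS := bounded_measurable_mean b1 b2.
move: (partZE b1) (partZE b2).
move: (softV mu Q1 s) (softV mu Q2 s) => V1 V2 eZ1 eZ2.
rewrite /renyi_half /softpol eZ1 eZ2.
have sqrtE a : Num.sqrt (expR (Q1 s a) / expR V1 * (expR (Q2 s a) / expR V2)) =
    expR (meanSA Q1 Q2 s a) * expR (- ((V1 + V2) / 2)).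
  have -> : expR (Q1 s a) / expR V1 * (expR (Q2 s a) / expR V2) =
      expR (meanSA Q1 Q2 s a - (V1 + V2) / 2) ^+ 2.
    rewrite -(expRB (Q1 s a)) -(expRB (Q2 s a)) -expRD expr2 -expRD.
    by congr expR; rewrite /meanSA; lra.
  by rewrite sqrtr_sqr ger0_norm ?expR_ge0// expRD.
under eq_Rintegral do rewrite sqrtE.
have intS := integrable_expR (Q := meanSA Q1 Q2) bS.
have -> := RintegralZr (expR (- ((V1 + V2) / 2))) measurableT intS.
rewrite -/(partZ mu (meanSA Q1 Q2) s) lnM ?posrE ?expR_gt0 ?partZ_gt0// expRK /softV.
lra.
Qed.

End soft_value.

Section soft_comparison.
Context {d1 d2 : measure_display} {S : measurableType d1} {A : measurableType d2}
  {R : realType}.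
Variables (mu : {measure set A -> \bar R}) (nu : {measure set S -> \bar R}).
Variables (p : S -> A -> S -> R) (gamma : R) (r1 r2 Q1 Q2 QC : S -> A -> R).
Hypotheses (mu0 : (0 < mu setT)%E) (muoo : (mu setT < +oo)%E).
Hypotheses (hp : transition_density nu p) (gamma0 : 0 <= gamma) (gamma1 : gamma < 1).
Hypotheses (opt1 : is_opt_softQ mu nu p gamma r1 Q1)
  (opt2 : is_opt_softQ mu nu p gamma r2 Q2)
  (optC : is_opt_softQ mu nu p gamma (meanSA r1 r2) QC).

Let bQ1 s : bounded_measurable (Q1 s) := bounded_measurable_section s opt1.1 opt1.2.1.
Let bQ2 s : bounded_measurable (Q2 s) := bounded_measurable_section s opt2.1 opt2.2.1.
Let bQC s : bounded_measurable (QC s) := bounded_measurable_section s optC.1 optC.2.1.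
Let bQS s : bounded_measurable (meanSA Q1 Q2 s) := bounded_measurable_mean (bQ1 s) (bQ2 s).

Let bV1 : bounded_measurable (softV mu Q1) := bounded_measurable_softV mu0 muoo opt1.1 opt1.2.1.
Let bV2 : bounded_measurable (softV mu Q2) := bounded_measurable_softV mu0 muoo opt2.1 opt2.2.1.
Let bVC : bounded_measurable (softV mu QC) := bounded_measurable_softV mu0 muoo optC.1 optC.2.1.
Let bVS : bounded_measurable (softV mu (meanSA Q1 Q2)) :=
  bounded_measurable_softV mu0 muoo (boundedSA_mean opt1.1 opt2.1)
    (measurableSA_mean opt1.2.1 opt2.2.1).
Let bVmean : bounded_measurable (fun y => (softV mu Q1 y + softV mu Q2 y) / 2) :=
  bounded_measurableMr _ (bounded_measurableD bV1 bV2).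

Let expect_meanV x a : expect nu p x a (fun y => (softV mu Q1 y + softV mu Q2 y) / 2) =
  (expect nu p x a (softV mu Q1) + expect nu p x a (softV mu Q2)) / 2.
Proof. by rewrite expectMr ?expectD//; exact: bounded_measurableD. Qed.

(* The expectations are generalized syntactically before calling [ring] or
   [lra]: comparing them up to conversion would unfold [softV]. *)
Let backup_mean x a : meanSA Q1 Q2 x a = meanSA r1 r2 x a +
  gamma * ((expect nu p x a (softV mu Q1) + expect nu p x a (softV mu Q2)) / 2).
Proof.
have [_ [_ e1]] := opt1; have [_ [_ e2]] := opt2.
rewrite /meanSA e1 e2 /soft_backup.
generalize (expect nu p x a (softV mu Q1)) (expect nu p x a (softV mu Q2)) => E1 E2.
ring.
Qed.

Lemma opt_softQ_mean_le s a : QC s a <= meanSA Q1 Q2 s a.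
Proof.
pose D (x : S * A) := QC x.1 x.2 - meanSA Q1 Q2 x.1 x.2.
have bD : has_ubound (range D).
  apply/normr_bounded_has_ubound/normr_boundedB; apply: normr_bounded_uncurry.
    exact: optC.1.
  exact: boundedSA_mean opt1.1 opt2.1.
suff : D (s, a) <= 0 by rewrite /D /= subr_le0.
apply: (le0_contraction_sup gamma1 bD) (s, a) => -[x b].
set M := sup (range D).
have QC_le y b' : QC y b' <= meanSA Q1 Q2 y b' + M.
  by rewrite -lerBlDl; apply: (ub_le_sup bD); exists (y, b').
have VC_le y : softV mu QC y <= (softV mu Q1 y + softV mu Q2 y) / 2 + M.
  apply: le_trans (le_softV mu0 muoo (bQC y) (bQS y) (QC_le y)) _.
  by rewrite lerD2r softV_mean_le.
have := le_expect hp x b bVC (bounded_measurableD bVmean (bounded_measurable_cst M)).2 VC_le.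
rewrite expectD ?expect_cst ?expect_meanV//; last exact: bounded_measurable_cst.
rewrite /D /= backup_mean optC.2.2 /soft_backup /meanSA.
generalize (expect nu p x b (softV mu Q1)) (expect nu p x b (softV mu Q2)).
generalize (expect nu p x b (softV mu QC)) => EC E1 E2 /(ler_wpM2l gamma0) le_EC; lra.
Qed.

Lemma mean_softQ_le_add C : boundedSA C ->
  (forall s a, C s a = C_backup mu nu p gamma Q1 Q2 C s a) ->
  forall s a, meanSA Q1 Q2 s a <= QC s a + C s a.
Proof.
move=> bC eC s a.
pose E (x : S * A) := meanSA Q1 Q2 x.1 x.2 - QC x.1 x.2 - C x.1 x.2.
have bE : has_ubound (range E).
  apply/normr_bounded_has_ubound/normr_boundedB; last exact: normr_bounded_uncurry bC.
  apply: normr_boundedB; last exact: normr_bounded_uncurry optC.1.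
  exact: normr_bounded_uncurry (boundedSA_mean opt1.1 opt2.1).
have supC := normr_bounded_sup_range a bC.
have C_le y b : C y b <= sup (range (C y)).
  by apply: ub_le_sup; [exact/normr_bounded_has_ubound/normr_bounded_section | exists b].
suff : E (s, a) <= 0 by rewrite /E /= !subr_le0 lerBlDl addrC.
apply: (le0_contraction_sup gamma1 bE) (s, a) => -[x b].
set M := sup (range E).
have mean_le y b' : meanSA Q1 Q2 y b' <= QC y b' + (sup (range (C y)) + M).
  have : E (y, b') <= M by apply: (ub_le_sup bE); exists (y, b').
  by rewrite /E /=; have := C_le y b'; lra.
(* [k] need not be measurable (a supremum over all actions), which is why
   [le_expect] only asks for a bound on its upper argument. *)
pose k y := renyi_half mu (softpol mu Q1 y) (softpol mu Q2 y) + sup (range (C y)).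
have kE : k = fun y => softV mu Q1 y + softV mu Q2 y - 2 * softV mu (meanSA Q1 Q2) y
    + sup (range (C y)).
  by apply/funext => y; rewrite /k renyi_half_softpol.
have bk : normr_bounded k.
  rewrite kE; apply: normr_boundedD supC; apply: normr_boundedB.
    exact: (bounded_measurableD bV1 bV2).2.
  exact: normr_boundedMl bVS.2.
pose g y := (softV mu Q1 y + softV mu Q2 y) / 2 - softV mu QC y - M.
have bg : bounded_measurable g.
  exact: bounded_measurableB (bounded_measurableB bVmean bVC) (bounded_measurable_cst M).
have g_le y : g y <= k y.
  rewrite kE /g; have := softV_mean_le mu0 muoo (bQ1 y) (bQ2 y).
  have := le_softV mu0 muoo (bQS y) (bQC y) (mean_le y).
  move: (softV mu Q1 y) (softV mu Q2 y) (softV mu QC y) (softV mu (meanSA Q1 Q2) y).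
  move=> V1 V2 VC VS; lra.
have := le_expect hp x b bg bk g_le.
rewrite expectB ?expectB ?expect_cst ?expect_meanV//; last 2 first.
- exact: bounded_measurableB bVmean bVC.
- exact: bounded_measurable_cst.
have Ck : C x b = gamma * expect nu p x b k by exact: eC.
rewrite /E /= Ck backup_mean optC.2.2 /soft_backup /meanSA.
generalize (expect nu p x b (softV mu Q1)) (expect nu p x b (softV mu Q2)).
generalize (expect nu p x b (softV mu QC)) (expect nu p x b k) => EC Ek E1 E2.
move=> /(ler_wpM2l gamma0) le_Ek; lra.
Qed.

End soft_comparison.

Unset Implicit Arguments.

Theorem corollary1 (d1 d2 : measure_display) (S : measurableType d1)
  (A : measurableType d2) (R : realType)
  (mu : {measure set A -> \bar R}) (nu : {measure set S -> \bar R})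
  (p : S -> A -> S -> R) (gamma : R)
  (r1 r2 Q1 Q2 QC C : S -> A -> R) :
  (0 < mu setT)%E -> (mu setT < +oo)%E ->
  transition_density nu p ->
  0 < gamma < 1 ->
  boundedSA r1 -> measurableSA r1 ->
  boundedSA r2 -> measurableSA r2 ->
  is_opt_softQ mu nu p gamma r1 Q1 ->
  is_opt_softQ mu nu p gamma r2 Q2 ->
  is_opt_softQ mu nu p gamma (fun s a => (r1 s a + r2 s a) / 2) QC ->
  boundedSA C -> measurableSA C ->
  (forall s a, C s a = C_backup mu nu p gamma Q1 Q2 C s a) ->
  let QSigma := fun s a => (Q1 s a + Q2 s a) / 2 in
  forall s : S,
    softV mu QC s <= softV mu QSigma s /\
    softV mu QSigma s - sup (range (C s)) <= softV mu QC s.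
Proof.
move=> mu0 muoo hp /andP[/ltW gamma0 gamma1] _ _ _ _ opt1 opt2 optC bC _ eC QSigma s.
have bQC := bounded_measurable_section s optC.1 optC.2.1.
have bQS := bounded_measurable_mean (bounded_measurable_section s opt1.1 opt1.2.1)
  (bounded_measurable_section s opt2.1 opt2.2.1).
split.
  rewrite -[X in _ <= X]addr0; apply: le_softV => // a; rewrite addr0.
  exact: opt_softQ_mean_le mu0 muoo hp gamma0 gamma1 opt1 opt2 optC s a.
rewrite lerBlDr; apply: le_softV => // a.
have := mean_softQ_le_add mu0 muoo hp gamma0 gamma1 opt1 opt2 optC bC eC s a.
have : C s a <= sup (range (C s)).
  by apply: ub_le_sup; [exact/normr_bounded_has_ubound/normr_bounded_section | exists a].
rewrite /QSigma /meanSA; lra.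
Qed.
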